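(* Fix real constants $u,v$ with $0<u<v<1$, and let $n\ge 1$ be an integer. Let $\beta>1$ be real and let $f(x)\in\mathbb Z[x]$ be a monic polynomial of degree $2n+2$ such that $f(\beta)=0$, $f(0)=1$, $$ \beta> \max\left\{ \frac 2u, \frac 1{1-v} \right\}, $$ and $$ \frac{f(x)}{(x-\beta)(x-1/\beta)} = x^{2n}+1+\sum_{i=1}^{2n-1}g_i x^i $$ for real numbers $g_i$ satisfying $u<g_i<v$ for $i=1,\dots,2n-1$. Then $f(x)$ is self-reciprocal (i.e. $x^{2n+2}f(1/x)=f(x)$) and $d_{\beta}(1)$ is $(1,2n+1)$-periodic.
   Context: For a real $\beta>1$, the beta transformation is $T_\beta(x)=\beta x-\lfloor \beta x\rfloor$ on $[0,1)$; for $x\in[0,1)$ put $x_n=\lfloor \beta T_\beta^{n-1}(x)\rfloor$ and $d_\beta(x)=x_1x_2x_3\cdots$. The expansion of one is $d_\beta(1):=\lim_{\epsilon\downarrow 0} d_\beta(1-\epsilon)$ (limit in the product topology). An infinite word $x_1x_2\cdots$ is eventually periodic if it can be written $x_1\cdots x_m(x_{m+1}\cdots x_{m+p})^\infty$ with $m\ge 0$, $p\ge 1$; choosing $m$ and $p$ minimal, the word is called $(m,p)$-periodic. *)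

From HB Require Import structures.
From mathcomp Require Import all_boot all_order all_algebra.
From mathcomp Require Import reals.
Set Implicit Arguments. Unset Strict Implicit. Unset Printing Implicit Defensive.
Import Order.TTheory GRing.Theory Num.Theory.
Local Open Scope ring_scope.

Definition Tbeta (R : realType) (beta x : R) : R :=
  beta * x - (Num.floor (beta * x))%:~R.

(* Digit sequence d_beta(x) = x_1 x_2 ..., indexed from 0:
   dbeta beta x k = x_{k+1} = floor (beta * T_beta^k x). *)
Definition dbeta (R : realType) (beta x : R) (k : nat) : int :=
  Num.floor (beta * iter k (Tbeta beta) x).

(* w is d_beta(1) := lim_{eps -> 0+} d_beta(1 - eps) in the product topology
   (on the discrete digit alphabet): every finite prefix of d_beta(1-eps)
   eventually (for small eps > 0) agrees with that of w. *)
Definition is_dbeta_one (R : realType) (beta : R) (w : nat -> int) : Prop :=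
  forall K : nat, exists2 e0 : R, 0 < e0 &
    forall eps : R, 0 < eps -> eps < e0 ->
      forall k : nat, (k <= K)%N -> dbeta beta (1 - eps) k = w k.

(* w = w_1 ... w_m (w_{m+1} ... w_{m+p})^oo  (0-indexed shift). *)
Definition eventually_periodic_with (w : nat -> int) (m p : nat) : Prop :=
  (1 <= p)%N /\ forall k : nat, (m <= k)%N -> w (k + p)%N = w k.

Definition mp_periodic (w : nat -> int) (m p : nat) : Prop :=
  eventually_periodic_with w m p /\
  forall m' p' : nat, eventually_periodic_with w m' p' ->
    (m <= m')%N /\ (p <= p')%N.

(* Since (X - b)(X - 1/b) = (1 - bX)(1 - X/b), the hypothesis reads f = (1 - bX) Q
   with Q = (1 - X/b) H, where H is the cofactor x^2n + 1 + sum g_i x^i.  Comparing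
   coefficients, b Q_k = Q_(k+1) - f_(k+1) with f_(k+1) an integer, so T_b maps Q_k to
   the fractional part of Q_(k+1).  The bounds on the g_i and on b put Q_1, ..., Q_2n
   in (0, 1), and Q_(2n+1) = -1/b; hence the orbit of 1 is Q_1, ..., Q_2n, 1 - 1/b,
   after which it returns to T_b 1 = T_b (1 - 1/b).  This orbit stays away from 0,
   so d_b(1) is the digit sequence of 1 itself, and 1 - 1/b does not recur before
   2n + 1 steps, which makes the period exact; the preperiod is 1 because the digit
   read at 1 - 1/b is one less than the digit read at 1.
   Self-reciprocity: f - x^(2n+2) f(1/x) = (X - b)(X - 1/b) D with D = H - x^2n H(1/x),
   whose coefficients g_i - g_(2n-i) have absolute value < 1; since the quadratic
   factor has constant term 1 and the product has integer coefficients, D = 0. *)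

From HB Require Import structures.
From mathcomp Require Import all_boot all_order all_algebra.
From mathcomp Require Import reals.
From mathcomp Require Import ring lra zify.
Set Implicit Arguments. Unset Strict Implicit. Unset Printing Implicit Defensive.
Import Order.TTheory GRing.Theory Num.Theory.

Definition periodic_from (T : Type) (y : nat -> T) (k0 p : nat) : Prop :=
  forall k, k0 <= k -> y (k + p) = y k.

Section PeriodicFrom.
Variables (T : Type) (y : nat -> T).

Lemma periodic_fromM k0 p q : periodic_from y k0 p -> periodic_from y k0 (q * p).
Proof.
move=> yp k k0k; elim: q => [|q IH]; first by rewrite addn0.
by rewrite mulSn addnA addnAC yp // (leq_trans k0k) // leq_addr.
Qed.

Lemma periodic_from_shift k0 N M p : 0 < N ->
  periodic_from y k0 N -> periodic_from y M p -> periodic_from y k0 p.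
Proof.
move=> N_gt0 yN yp k k0k.
have kMN : M <= k + M * N by rewrite (leq_trans _ (leq_addl _ _)) // leq_pmulr.
rewrite -(periodic_fromM M yN (leq_trans k0k (leq_addr p k))) addnAC yp //.
exact: periodic_fromM M yN k k0k.
Qed.

Lemma periodic_from_dvdn k0 N p : 0 < N ->
  periodic_from y k0 N -> periodic_from y k0 p ->
  (forall i, 0 < i < N -> y (k0 + i) <> y k0) -> N %| p.
Proof.
move=> N_gt0 yN yp y_first; rewrite /dvdn; case: (posnP (p %% N)) => // rho_gt0.
case: (y_first (p %% N)); first by rewrite rho_gt0 ltn_mod.
rewrite -(periodic_fromM (p %/ N) yN (leq_addr _ _)) -addnA.
by rewrite [(p %% N + _)]addnC -divn_eq yp.
Qed.

Lemma periodic_from_mod N k : periodic_from y 1 N -> y k.+1 = y (k %% N).+1.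
Proof. by move=> yN; rewrite {1}(divn_eq k N) addnC -addSn (periodic_fromM _ yN). Qed.

End PeriodicFrom.

Lemma iter_periodic_from (T : Type) (h : T -> T) x N :
  iter N.+1 h x = h x -> periodic_from (fun k => iter k h x) 1 N.
Proof. by move=> hN [|k] // _; rewrite addSn -addnS iterD hN -iterSr. Qed.

Local Open Scope ring_scope.

Lemma int_num_norm_lt1 (R : archiNumDomainType) (x : R) :
  x \is a Num.int -> `|x| < 1 -> x = 0.
Proof.
case/intrP=> z -> {x}; rewrite -intr_norm -[1]/(1%:~R) ltr_int => z1.
by have -> : z = 0 by lia.
Qed.

(* Once the lower coefficients of D vanish, (P * D)`_i = P`_0 * D`_i = D`_i. *)
Lemma int_mul_small_coef_eq0 (R : archiNumDomainType) (P D : {poly R}) :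
  P`_0 = 1 -> (forall i, (P * D)`_i \is a Num.int) -> (forall i, `|D`_i| < 1) ->
  D = 0.
Proof.
move=> P0 PD_int D_small; apply/polyP => i; rewrite coef0.
elim/ltn_ind: i => i IH; apply: int_num_norm_lt1 (D_small i).
suff <- : (P * D)`_i = D`_i by [].
rewrite coefM big_ord_recl subn0 P0 mul1r big1 ?addr0 // => j _.
by rewrite IH ?mulr0 //= subnSK // leq_subr.
Qed.

Definition reciprocal (R : nzRingType) (m : nat) (p : {poly R}) : {poly R} :=
  \poly_(i < m.+1) p`_(m - i).

Lemma horner_reciprocal (R : fieldType) (m : nat) (p : {poly R}) (x : R) :
  (size p <= m.+1)%N -> x != 0 -> (reciprocal m p).[x] = x ^+ m * p.[x^-1].
Proof.
move=> sp x0; rewrite horner_poly (horner_coef_wide _ sp) mulr_sumr.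
rewrite [RHS](reindex_inj rev_ord_inj); apply: eq_bigr => i _ /=.
have im : (i <= m)%N by rewrite -ltnS.
rewrite subSS exprVn -[in x ^+ m](subnK im) exprD.
by rewrite [RHS]mulrC mulrA divfK ?expf_neq0.
Qed.

Lemma poly_eq_horner_nonzero (R : numFieldType) (p q : {poly R}) :
  (forall x, x != 0 -> p.[x] = q.[x]) -> p = q.
Proof.
move=> pq; apply/eqP; rewrite -subr_eq0; apply/eqP.
apply: (@roots_geq_poly_eq0 _ _ [seq i.+1%:R | i <- iota 0 (size (p - q))]).
- by apply/allP => _ /mapP[i _ ->]; rewrite /root hornerD hornerN pq ?subrr ?pnatr_eq0.
- by rewrite map_inj_uniq ?iota_uniq // => i j /eqP; rewrite eqr_nat => /eqP [].
- by rewrite size_map size_iota.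
Qed.

Lemma reciprocalM (R : numFieldType) (m1 m2 : nat) (p q : {poly R}) :
  (size p <= m1.+1)%N -> (size q <= m2.+1)%N ->
  reciprocal (m1 + m2) (p * q) = reciprocal m1 p * reciprocal m2 q.
Proof.
move=> sp sq; apply: poly_eq_horner_nonzero => x x0.
have spq : (size (p * q)%R <= (m1 + m2).+1)%N.
  by apply: (leq_trans (size_polyMleq _ _)); move: sp sq; lia.
by rewrite hornerM !horner_reciprocal // hornerM exprD mulrACA.
Qed.

Lemma self_reciprocal_mul (R : archiNumFieldType) (k m : nat) (P H : {poly R}) :
  P`_0 = 1 -> (size P <= k.+1)%N -> reciprocal k P = P -> (size H <= m.+1)%N ->
  (forall i, (P * H)`_i \is a Num.int) ->
  (forall i, (i <= m)%N -> `|H`_i - H`_(m - i)| < 1) ->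
  reciprocal (k + m) (P * H) = P * H.
Proof.
move=> P0 sP Pk sH PH_int H_near; rewrite reciprocalM // Pk.
suff -> : reciprocal m H = H by [].
apply/eqP; rewrite eq_sym -subr_eq0; apply/eqP/(int_mul_small_coef_eq0 P0) => i.
  rewrite mulrBr -[P in P * reciprocal _ _]Pk -reciprocalM // coefB coef_poly.
  by case: ifP => _; rewrite rpredB ?rpred0.
rewrite coefB coef_poly ltnS; case: leqP => [/H_near //| mi].
by rewrite nth_default ?subrr ?normr0 // (leq_trans sH).
Qed.

Lemma XsubC_mul_XsubCV (R : fieldType) (a : R) : a != 0 ->
  ('X - a%:P) * ('X - a^-1%:P) = (1 - a%:P * 'X) * (1 - a^-1%:P * 'X).
Proof.
move=> a0; have aaV : a%:P * a^-1%:P = 1 :> {poly R} by rewrite -polyCM mulfV.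
apply/eqP; rewrite -subr_eq0; apply/eqP.
transitivity ((a%:P * a^-1%:P - 1) * (1 - 'X ^+ 2)); first by ring.
by rewrite aaV subrr mul0r.
Qed.

Lemma reciprocal_XsubC_mul_XsubCV (R : numFieldType) (a : R) : a != 0 ->
  reciprocal 2 (('X - a%:P) * ('X - a^-1%:P)) = ('X - a%:P) * ('X - a^-1%:P).
Proof.
move=> a0; apply: poly_eq_horner_nonzero => x x0.
have sP : (size (('X - a%:P) * ('X - a^-1%:P))%R <= 3)%N.
  by rewrite (leq_trans (size_polyMleq _ _)) // !size_XsubC.
by rewrite horner_reciprocal // !hornerM !hornerXsubC; field; rewrite a0.
Qed.

Lemma coef_one_subCX_mul (R : nzRingType) (a : R) (P : {poly R}) k :
  ((1 - a%:P * 'X) * P)`_k.+1 = P`_k.+1 - a * P`_k.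
Proof. by rewrite mulrBl mul1r -mulrA coefB coefCM coefXM. Qed.

Lemma coef0_one_subCX_mul (R : nzRingType) (a : R) (P : {poly R}) :
  ((1 - a%:P * 'X) * P)`_0 = P`_0.
Proof. by rewrite mulrBl mul1r -mulrA coefB coefCM coefXM mulr0 subr0. Qed.

Lemma floor_eq0 (R : archiRealDomainType) (y : R) : 0 <= y < 1 -> Num.floor y = 0.
Proof.
by move=> /andP[y_ge0 y_lt1]; apply/eqP; rewrite eq_le floor_le0 floor_ge0 y_ge0 y_lt1.
Qed.

Lemma floor_subr1 (R : archiRealDomainType) (x : R) :
  Num.floor (x - 1) = Num.floor x - 1.
Proof. by rewrite -[1]/((1 : int)%:~R) -intrN floorDrz ?intr_int // intrKfloor. Qed.

Lemma floor_addrz (R : archiRealDomainType) (y : R) (z : int) :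
  0 <= y < 1 -> Num.floor (y + z%:~R) = z.
Proof. by move=> y01; rewrite floorDrz ?intr_int // intrKfloor floor_eq0 ?add0r. Qed.

Lemma bernoulli_ler (R : realDomainType) (x : R) (n : nat) :
  0 <= x -> 1 + n%:R * x <= (1 + x) ^+ n.
Proof.
move=> x_ge0; elim: n => [|n IH]; first by rewrite mul0r addr0 expr0.
have n_ge0 : 0 <= n%:R :> R by [].
rewrite exprS -natr1; nra.
Qed.

Definition beta_orbit (R : realType) (b x : R) (k : nat) : R := iter k (Tbeta b) x.

Section BetaOrbit.
Variables (R : realType) (b : R).

Lemma Tbeta_ge0 x : 0 <= Tbeta b x.
Proof. by rewrite /Tbeta subr_ge0 floor_le. Qed.

Lemma Tbeta_lt1 x : Tbeta b x < 1.
Proof. by have := floorD1_gt (b * x); rewrite /Tbeta intrD; lra. Qed.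

Lemma TbetaE x y (z : int) : 0 <= y < 1 -> b * x = y + z%:~R -> Tbeta b x = y.
Proof. by move=> y01 bx; rewrite /Tbeta bx floor_addrz // addrK. Qed.

Lemma Tbeta_one_subV : b != 0 -> Tbeta b (1 - b^-1) = Tbeta b 1.
Proof. by move=> b0; rewrite /Tbeta mulrBr mulfV // mulr1 floor_subr1 intrB; ring. Qed.

Lemma beta_orbitS x k :
  beta_orbit b x k.+1 = b * beta_orbit b x k - (dbeta b x k)%:~R.
Proof. by []. Qed.

Lemma beta_orbit_ge0 x k : 0 <= beta_orbit b x k.+1.
Proof. exact: Tbeta_ge0. Qed.

Lemma beta_orbit_lt1 x k : beta_orbit b x k.+1 < 1.
Proof. exact: Tbeta_lt1. Qed.

Lemma dbeta_periodic x k0 p :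
  periodic_from (beta_orbit b x) k0 p -> periodic_from (dbeta b x) k0 p.
Proof. by move=> yp k k0k; rewrite /dbeta -!/(beta_orbit b x _) yp. Qed.

Hypothesis b_gt1 : 1 < b.

Lemma expr_norm_lt1_eq0 (z : R) : (forall j, `|b ^+ j * z| < 1) -> z = 0.
Proof.
move=> bz_small; have [//|z_neq0] := eqVneq z 0; exfalso.
have z_gt0 : 0 < `|z| * (b - 1) by rewrite mulr_gt0 ?normr_gt0 ?subr_gt0.
set t := (`|z| * (b - 1))^-1.
have /archi_boundP t_lt : 0 <= t by rewrite invr_ge0 ltW.
set j := Num.bound t in t_lt.
have := bz_small j; rewrite normrM ger0_norm ?exprn_ge0 ?ltW ?(lt_trans ltr01) //.
move=> bjz_lt1.
have b1_ge0 : 0 <= b - 1 by rewrite subr_ge0 ltW.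
have := bernoulli_ler j b1_ge0; rewrite [1 + (b - 1)]addrC subrK.
have : t * (`|z| * (b - 1)) = 1 by rewrite mulVf ?gt_eqF.
have := normr_ge0 z; clearbody t j; nra.
Qed.

(* Two orbit points followed by the same digits differ by an amount that is
   multiplied by b at each step and yet stays in (-1, 1). *)
Lemma beta_orbit_periodic_of_digits x m p :
  periodic_from (dbeta b x) m p -> periodic_from (beta_orbit b x) m.+1 p.
Proof.
move=> wp; pose d k := beta_orbit b x (k + p) - beta_orbit b x k.
have dS k : (m <= k)%N -> d k.+1 = b * d k.
  by move=> mk; rewrite /d addSn !beta_orbitS wp //; ring.
have d_small k : `|d k.+1| < 1.
  have := beta_orbit_ge0 x k; have := beta_orbit_lt1 x k.
  have := beta_orbit_ge0 x (k + p); have := beta_orbit_lt1 x (k + p).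
  by rewrite /d addSn ltr_norml; lra.
move=> k mk; apply/eqP; rewrite -subr_eq0 -/(d k); apply/eqP.
apply: expr_norm_lt1_eq0 => j; have -> : b ^+ j * d k = d (k + j)%N.
  elim: j => [|j IH]; first by rewrite mul1r addn0.
  by rewrite exprS -mulrA IH addnS dS // (leq_trans (ltnW mk) (leq_addr _ _)).
by case: k mk => // k _; rewrite addSn d_small.
Qed.

(* T_b^k (x - eps) = T_b^k x - eps b^k as long as eps b^k stays below the orbit,
   which the lower bound L guarantees up to k = K + 1. *)
Lemma dbeta_left_stable x L : 0 < L -> (forall k, L <= beta_orbit b x k.+1) ->
  forall K, exists2 e0 : R, 0 < e0 & forall eps, 0 < eps -> eps < e0 ->
    forall k, (k <= K)%N -> dbeta b (x - eps) k = dbeta b x k.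
Proof.
have b_gt0 : 0 < b by rewrite (lt_trans ltr01).
move=> L_gt0 y_ge_L K; have bK_gt0 : 0 < b ^+ K.+1 by rewrite exprn_gt0.
exists (L / b ^+ K.+1); first by rewrite divr_gt0.
move=> eps eps_gt0; rewrite ltr_pdivlMr // => eps_small.
pose y k := beta_orbit b x k - eps * b ^+ k.
have y_step k : (k <= K)%N ->
    b * y k = y k.+1 + (dbeta b x k)%:~R /\ 0 <= y k.+1 < 1.
  move=> kK; split; first by rewrite /y beta_orbitS exprS; ring.
  have : b ^+ k.+1 <= b ^+ K.+1 by rewrite ler_eXn2l // ltW.
  have := y_ge_L k; have := beta_orbit_lt1 x k; have := exprn_ge0 k.+1 (ltW b_gt0).
  rewrite /y; nra.
have orbit_shift k : (k <= K.+1)%N -> beta_orbit b (x - eps) k = y k.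
  elim: k => [|k IH] kK; first by rewrite /y expr0 mulr1.
  have [bE y01] := y_step k kK.
  by rewrite /beta_orbit iterS -/(beta_orbit b _ k) IH 1?ltnW // (TbetaE y01 bE).
move=> k kK; have [bE y01] := y_step k kK.
by rewrite /dbeta -/(beta_orbit b _ k) orbit_shift 1?ltnW // bE floor_addrz.
Qed.

(* The point of index N first returns after N steps, so every period of the digits,
   hence of the orbit, is a multiple of N; preperiod 0 is excluded by the digits 0, N. *)
Lemma mp_periodic_dbeta x N : (0 < N)%N -> periodic_from (beta_orbit b x) 1 N ->
  (forall i, (0 < i < N)%N -> beta_orbit b x (N + i) <> beta_orbit b x N) ->
  dbeta b x N <> dbeta b x 0 -> mp_periodic (dbeta b x) 1 N.
Proof.
move=> N_gt0 yN y_first w_first; have wN := dbeta_periodic yN.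
split=> [//|m p [p_gt0 wp]].
have yp := periodic_from_shift N_gt0 yN (beta_orbit_periodic_of_digits wp).
have /dvdnP[q p_eq] : (N %| p)%N.
  by apply: (periodic_from_dvdn N_gt0) y_first => k Nk;
    [apply: yN | apply: yp]; rewrite (leq_trans N_gt0 Nk).
have q_gt0 : (0 < q)%N by move: p_gt0; rewrite p_eq muln_gt0 => /andP[].
split; last by rewrite p_eq leq_pmull.
case: m wp => // wp; case: w_first.
rewrite -(wp 0%N) // add0n p_eq -(prednK q_gt0) mulSn.
by rewrite (periodic_fromM _ wN).
Qed.

End BetaOrbit.

Section CoefficientOrbit.
Variables (R : realType) (b : R) (f : {poly int}) (Q : {poly R}).
Hypothesis fQ : map_poly intr f = (1 - b%:P * 'X) * Q.

(* b Q_k and Q_(k+1) differ by the integer coefficient f_(k+1). *)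
Lemma Tbeta_coef k : Tbeta b Q`_k = Q`_k.+1 - (Num.floor Q`_k.+1)%:~R.
Proof.
have bQ : b * Q`_k = Q`_k.+1 + (- f`_k.+1)%:~R.
  by rewrite intrN -coef_map fQ coef_one_subCX_mul; ring.
by rewrite /Tbeta bQ floorDrz ?intr_int // intrKfloor intrD; ring.
Qed.

Lemma beta_orbit_coef K : Q`_0 = 1 -> (forall k, (0 < k <= K)%N -> 0 <= Q`_k < 1) ->
  forall k, (k <= K)%N -> beta_orbit b 1 k = Q`_k.
Proof.
move=> Q0 Q01; elim=> [|k IH] kK; first by rewrite Q0.
rewrite /beta_orbit iterS -/(beta_orbit b 1 k) IH 1?ltnW // Tbeta_coef.
by rewrite floor_eq0 ?subr0 // Q01.
Qed.

End CoefficientOrbit.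

Section SmallCofactor.
Variables (R : realType) (u v b : R) (m : nat) (g : nat -> R) (f : {poly int}).
Hypotheses (u_gt0 : 0 < u) (v_lt1 : v < 1) (m_ge2 : (2 <= m)%N) (b_gt1 : 1 < b).
Hypotheses (binv_u : b^-1 < u / 2) (binv_v : b^-1 < 1 - v).
Hypothesis g_bounds : forall i, (0 < i < m)%N -> u < g i /\ g i < v.

Local Notation H := ('X^m + 1 + \sum_(1 <= i < m) g i *: 'X^i : {poly R}).
Local Notation Q := ((1 - b^-1%:P * 'X) * H).
Hypothesis fE : map_poly intr f = ('X - b%:P) * ('X - b^-1%:P) * H.

Let m_gt0 : (0 < m)%N. Proof. exact: leq_trans m_ge2. Qed.
Let binv_gt0 : 0 < b^-1. Proof. by rewrite invr_gt0 (lt_trans ltr01). Qed.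
Let binv_lt_u : b^-1 < u.
Proof. by rewrite (lt_le_trans binv_u) // ger_pMr // invf_le1; lra. Qed.
Let u_lt1 : u < 1.
Proof. by have [ug gv] := @g_bounds 1 m_ge2; rewrite (lt_trans ug) // (lt_trans gv). Qed.
Let v_lt : v < 1 - b^-1. Proof. by have := binv_v; lra. Qed.
Let binv_lt1 : b^-1 < 1. Proof. by rewrite invf_lt1 // (lt_trans ltr01). Qed.

Lemma coef_H k : H`_k = (k == m)%:R + (k == 0)%:R + (if (0 < k < m)%N then g k else 0).
Proof. by rewrite !coefD coefXn coef1 coef_sumMXn big_nat1_cond_eq andbT. Qed.

Lemma coef_H0 : H`_0 = 1.
Proof. by rewrite coef_H eq_sym gtn_eqF // add0r addr0. Qed.

Lemma coef_Hm : H`_m = 1.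
Proof. by rewrite coef_H eqxx (gtn_eqF m_gt0) ltnn andbF addr0 addr0. Qed.

Lemma coef_H_gt k : (m < k)%N -> H`_k = 0.
Proof.
move=> mk; rewrite coef_H (gtn_eqF mk) gtn_eqF ?(ltn_trans m_gt0 mk) //.
by rewrite ltnNge (ltnW mk) andbF !addr0.
Qed.

Lemma coef_H_mid k : (0 < k < m)%N -> H`_k = g k.
Proof.
move=> /andP[k_gt0 km].
by rewrite coef_H k_gt0 km (ltn_eqF km) (gtn_eqF k_gt0) !mulr0n !add0r.
Qed.

Lemma coef_H_bounds k : (k < m)%N -> 0 < H`_k <= 1.
Proof.
case: k => [|k] km; first by rewrite coef_H0 lexx ltr01.
have [ug gv] := @g_bounds k.+1 km; rewrite coef_H_mid //.
by rewrite (lt_trans u_gt0 ug) ltW // (lt_trans gv v_lt1).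
Qed.

Lemma size_H : (size H <= m.+1)%N.
Proof. by apply/leq_sizeP => k mk; rewrite coef_H_gt. Qed.

Lemma coef_Q0 : Q`_0 = 1.
Proof. by rewrite coef0_one_subCX_mul coef_H0. Qed.

Lemma coef_Q_mid k : (0 < k < m)%N -> u - b^-1 < Q`_k < v.
Proof.
case: k => // k km; rewrite coef_one_subCX_mul coef_H_mid //.
have [ug gv] := g_bounds km.
have /andP[Hk_gt0 Hk_le1] := coef_H_bounds (ltnW km).
have : 0 < b^-1 * H`_k <= b^-1 by rewrite mulr_gt0 // ger_pMr.
case/andP=> ? ?; apply/andP; split; lra.
Qed.

Lemma coef_Qm : 1 - b^-1 < Q`_m < 1.
Proof.
have m1_mid : (0 < m.-1 < m)%N by move: m_ge2; lia.
have := coef_one_subCX_mul b^-1 H m.-1; rewrite prednK // => ->.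
rewrite coef_Hm coef_H_mid //; have [ug gv] := g_bounds m1_mid.
have bg_gt0 : 0 < b^-1 * g m.-1 by rewrite mulr_gt0 // (lt_trans u_gt0 ug).
have bg_lt : b^-1 * g m.-1 < b^-1 by rewrite gtr_pMr // (lt_trans gv v_lt1).
by apply/andP; split; lra.
Qed.

Lemma coef_QmS : Q`_m.+1 = - b^-1.
Proof. by rewrite coef_one_subCX_mul coef_H_gt // coef_Hm sub0r mulr1. Qed.

Lemma map_f_one_subCX_mulQ : map_poly intr f = (1 - b%:P * 'X) * Q.
Proof. by rewrite fE XsubC_mul_XsubCV ?mulrA // gt_eqF // (lt_trans ltr01). Qed.

Lemma beta_orbit_one_coef k : (k <= m)%N -> beta_orbit b 1 k = Q`_k.
Proof.
apply: (beta_orbit_coef map_f_one_subCX_mulQ coef_Q0) => j /andP[j_gt0 jm].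
have [jm'|mj] := ltnP j m.
  have /andP[Qj_gt Qj_lt] : u - b^-1 < Q`_j < v by rewrite coef_Q_mid ?j_gt0.
  by rewrite ltW ?(lt_trans Qj_lt) // (lt_trans _ Qj_gt) // subr_gt0.
have -> : j = m by apply/eqP; rewrite eqn_leq jm mj.
by have /andP[Qm_gt ->] := coef_Qm; rewrite ltW // (lt_trans _ Qm_gt) // subr_gt0.
Qed.

Lemma beta_orbit_one_last : beta_orbit b 1 m.+1 = 1 - b^-1.
Proof.
rewrite /beta_orbit iterS -/(beta_orbit b 1 m) beta_orbit_one_coef //.
rewrite (Tbeta_coef map_f_one_subCX_mulQ) coef_QmS.
have -> : - b^-1 = (1 - b^-1) + (- 1 : int)%:~R by rewrite intrN; ring.
by rewrite floor_addrz ?intrN; [ring | rewrite subr_ge0 (ltW binv_lt1) ltrBlDr ltrDl].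
Qed.

Lemma beta_orbit_one_periodic : periodic_from (beta_orbit b 1) 1 m.+1.
Proof.
apply: iter_periodic_from; rewrite iterS -/(beta_orbit b 1 m.+1).
by rewrite beta_orbit_one_last Tbeta_one_subV // gt_eqF // (lt_trans ltr01).
Qed.

Lemma beta_orbit_one_ge k : u - b^-1 <= beta_orbit b 1 k.+1.
Proof.
have u_le : u - b^-1 <= 1 - b^-1 by rewrite lerD2r ltW.
rewrite (periodic_from_mod _ beta_orbit_one_periodic).
have : (k %% m.+1 < m.+1)%N by rewrite ltn_mod.
set j := (k %% m.+1)%N; rewrite ltnS leq_eqVlt => /orP[/eqP -> | jm].
  by rewrite beta_orbit_one_last.
rewrite beta_orbit_one_coef //; have [jm'|] := ltnP j.+1 m.
  by have /andP[/ltW] := @coef_Q_mid j.+1 jm'.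
move=> mj; have -> : j.+1 = m by apply/eqP; rewrite eqn_leq jm mj.
by have /andP[/(le_lt_trans u_le)/ltW] := coef_Qm.
Qed.

Lemma beta_orbit_one_first_return i : (0 < i < m.+1)%N ->
  beta_orbit b 1 (m.+1 + i) <> beta_orbit b 1 m.+1.
Proof.
move=> /andP[i_gt0 im]; rewrite addnC beta_orbit_one_periodic //.
rewrite beta_orbit_one_last beta_orbit_one_coef //; apply/eqP.
have [im'|mi] := ltnP i m.
  have /andP[_ Qi_lt] : u - b^-1 < Q`_i < v by rewrite coef_Q_mid ?i_gt0.
  by rewrite lt_eqF // (lt_trans Qi_lt v_lt).
have -> : i = m by apply/eqP; rewrite eqn_leq mi -ltnS im.
by have /andP[/gt_eqF -> _] := coef_Qm.
Qed.

Lemma dbeta_one_last_neq_first : dbeta b 1 m.+1 <> dbeta b 1 0.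
Proof.
rewrite /dbeta -/(beta_orbit b 1 m.+1) beta_orbit_one_last /=.
rewrite mulrBr mulfV ?gt_eqF ?(lt_trans ltr01) // floor_subr1 => /eqP.
by rewrite -subr_eq0 addrAC subrr sub0r oppr_eq0.
Qed.

Lemma coef_H_nearly_palindromic i : (i <= m)%N -> `|H`_i - H`_(m - i)| < 1.
Proof.
rewrite leq_eqVlt => /orP[/eqP -> | im].
  by rewrite subnn coef_Hm coef_H0 subrr normr0.
case: i im => [|i] im; first by rewrite subn0 coef_H0 coef_Hm subrr normr0.
have mi : (0 < m - i.+1 < m)%N by move: im; lia.
have [ug gv] := @g_bounds i.+1 im; have [ug' gv'] := g_bounds mi.
(* lra does not see section hypotheses. *)
rewrite !coef_H_mid // ltr_norml; have := u_gt0; have := v_lt1.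
by move=> *; apply/andP; split; lra.
Qed.

Lemma self_reciprocal_f (x : R) : x != 0 ->
  x ^+ (m + 2) * (map_poly intr f).[x^-1] = (map_poly intr f).[x].
Proof.
move=> x0; have b0 : b != 0 by rewrite gt_eqF // (lt_trans ltr01).
pose P : {poly R} := ('X - b%:P) * ('X - b^-1%:P).
have fPH : map_poly intr f = P * H := fE.
have sP : (size P <= 3)%N by rewrite (leq_trans (size_polyMleq _ _)) // !size_XsubC.
rewrite addnC -horner_reciprocal //; last first.
  rewrite fPH (leq_trans (size_polyMleq _ _)) //; move: sP size_H.
  by move: (size P) (size H) => sp sh; lia.
rewrite fPH self_reciprocal_mul //.
- by rewrite -horner_coef0 hornerM !hornerXsubC !sub0r mulrNN mulfV.
- exact: reciprocal_XsubC_mul_XsubCV.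
- exact: size_H.
- by move=> i; rewrite -fPH coef_map intr_int.
- exact: coef_H_nearly_palindromic.
Qed.

Lemma self_reciprocal_and_dbeta_one_periodic :
  (forall x : R, x != 0 ->
     x ^+ (m + 2) * (map_poly intr f).[x^-1] = (map_poly intr f).[x]) /\
  exists w : nat -> int, is_dbeta_one b w /\ mp_periodic w 1 m.+1.
Proof.
split; first exact: self_reciprocal_f.
exists (dbeta b 1); split.
  apply: (dbeta_left_stable b_gt1 (L := u - b^-1)); last exact: beta_orbit_one_ge.
  by rewrite subr_gt0.
apply: mp_periodic_dbeta => //.
- exact: beta_orbit_one_periodic.
- exact: beta_orbit_one_first_return.
- exact: dbeta_one_last_neq_first.
Qed.

End SmallCofactor.

Theorem lemma1 (R : realType) (u v : R) (n : nat) (beta : R)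
  (f : {poly int}) (g : nat -> R) :
  0 < u -> u < v -> v < 1 -> (1 <= n)%N -> 1 < beta ->
  f \is monic -> size f = (2 * n + 3)%N ->
  (map_poly intr f : {poly R}).[beta] = 0 ->
  f.[0] = 1 ->
  Num.max (2 / u) (1 / (1 - v)) < beta ->
  map_poly intr f =
    ('X - beta%:P) * ('X - (beta^-1)%:P) *
    ('X^(2 * n) + 1 + \sum_(1 <= i < 2 * n) g i *: 'X^i) ->
  (forall i : nat, (1 <= i <= 2 * n - 1)%N -> u < g i /\ g i < v) ->
  (forall x : R, x != 0 ->
     x ^+ (2 * n + 2) * (map_poly intr f : {poly R}).[x^-1]
       = (map_poly intr f : {poly R}).[x])
  /\ exists w : nat -> int, is_dbeta_one beta w /\ mp_periodic w 1 (2 * n + 1).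
Proof.
(* The discarded hypotheses follow from the factorisation of f and the bounds on g. *)
move=> u_gt0 _ v_lt1 n_gt0 b_gt1 _ _ _ _ b_big fE g_bounds.
have beta_gt0 : 0 < beta by rewrite (lt_trans ltr01).
move: b_big; rewrite gt_max => /andP[u_b v_b].
rewrite addn1; apply: (self_reciprocal_and_dbeta_one_periodic u_gt0 v_lt1 _ b_gt1 _ _ _ fE).
- by move: n_gt0; lia.
- by rewrite -invf_div ltf_pV2 ?posrE ?divr_gt0.
- by rewrite div1r in v_b; rewrite -[1 - v]invrK ltf_pV2 ?posrE ?invr_gt0 ?subr_gt0.
- by move=> i i_mid; apply: g_bounds; move: i_mid; lia.
Qed.
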